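(* For every $f\in G_{\mathcal S}$, let $\mathcal R(f):=\big(f^{\circ-1}\big)^{\vdash-1}$, where $f^{\circ-1}$ is the inverse of $f$ for $\circ$ and $h^{\vdash-1}$ denotes the inverse of $h$ for $\vdash$. Then $$f=\mathcal R(f)\dashv f.$$
   Context: A reduced plane tree is a rooted plane tree in which every internal node has at least two children (a single leaf is allowed). Trees are encoded as words in noncommuting letters $S_0,S_1,\dots$ by reading nodes in preorder and writing $S_{k-1}$ for a node with $k$ children (a leaf is $S_0$); series are formal linear combinations of such words. For a tree $t_0$ with $n$ leaves and trees $t_1,\dots,t_n$, $t_0\circ(t_1,\dots,t_n)$ is obtained by replacing the leaves of $t_0$, from left to right, by $t_1,\dots,t_n$; this is extended multilinearly to series. The Schröder group $G_{\mathcal S}$ consists of series $p=S_0+\sum_{n\ge2}p_n$, $p_n$ a finite linear combination of trees with $n$ leaves, with product $p\circ q=q+\sum_{n\ge2}p_n\circ(q,\dots,q)$ (a group with identity $S_0$). For $f=S_0+\sum_{n\ge2}f_n$ and $g$ in $G_{\mathcal S}$ define $$f\dashv g=S_0+\sum_{n\ge2}f_n\circ(\underbrace{g,\dots,g}_{n-1},S_0),\qquad f\vdash g=g+\sum_{n\ge2}f_n\circ(\underbrace{S_0,\dots,S_0}_{n-1},g).$$ $G_{\mathcal S}$ is a group under $\vdash$ with identity $S_0$. *)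

From mathcomp Require Import all_boot all_algebra.
Set Implicit Arguments. Unset Strict Implicit. Unset Printing Implicit Defensive.
Import GRing.Theory.
Local Open Scope ring_scope.

(* Rooted plane trees: a node with its ordered list of children.
   A leaf (the word S_0) is [Node [::]]. *)
Inductive tree := Node of seq tree.

Definition leaf : tree := Node [::].

Definition is_leaf (t : tree) : bool := if t is Node [::] then true else false.

Fixpoint reduced (t : tree) : bool :=
  match t with
  | Node ts =>
      (size ts != 1%N) &&
      (fix all_red (l : seq tree) : bool :=
         match l with [::] => true | s :: l' => reduced s && all_red l' end) ts
  end.

Fixpoint prod_lists (A : Type) (ls : seq (seq A)) : seq (seq A) :=
  match ls with
  | [::] => [:: [::]]
  | l :: ls' => [seq x :: r | x <- l, r <- prod_lists ls']
  end.

(* [decomps t] lists (once each) all pairs (t0, [:: t1; ...; tn]) with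
   t = t0 o (t1, ..., tn), n = number of leaves of t0 (grafting the t_i on the
   leaves of t0 from left to right). *)
Fixpoint decomps (t : tree) : seq (tree * seq tree) :=
  match t with
  | Node ts =>
      (leaf, [:: t]) ::
      (if ts is [::] then [::]
       else [seq (Node (map fst c), flatten (map snd c))
            | c <- prod_lists (map decomps ts)])
  end.

(* Series: formal (possibly infinite) linear combinations of trees, given by
   their coefficient function.  Since there are finitely many reduced trees
   with n leaves, each homogeneous part is automatically finite. *)
Definition series (R : comNzRingType) := tree -> R.

Definition S0 (R : comNzRingType) : series R := fun t => if is_leaf t then 1 else 0.

(* Elements of the Schroder group: supported on reduced trees, coefficient 1
   on the leaf S_0 (all other reduced trees have >= 2 leaves). *)
Definition in_GS (R : comNzRingType) (p : series R) : Prop :=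
  p leaf = 1 /\ forall t, ~~ reduced t -> p t = 0.

(* p o q = q + sum_{n>=2} p_n o (q, ..., q), coefficientwise (multilinear
   extension of grafting). *)
Definition ocomp (R : comNzRingType) (p q : series R) : series R := fun t =>
  q t + \sum_(d <- decomps t | (2 <= size d.2)%N)
          p d.1 * \prod_(s <- d.2) q s.

(* f -| g = S_0 + sum_{n>=2} f_n o (g, ..., g, S_0)  (n-1 copies of g). *)
Definition dashv (R : comNzRingType) (f g : series R) : series R := fun t =>
  S0 R t + \sum_(d <- decomps t | (2 <= size d.2)%N)
          f d.1 * ((\prod_(s <- take (size d.2).-1 d.2) g s) *
                   (\prod_(s <- drop (size d.2).-1 d.2) S0 R s)).

(* f |- g = g + sum_{n>=2} f_n o (S_0, ..., S_0, g)  (n-1 copies of S_0). *)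
Definition vdash (R : comNzRingType) (f g : series R) : series R := fun t =>
  g t + \sum_(d <- decomps t | (2 <= size d.2)%N)
          f d.1 * ((\prod_(s <- take (size d.2).-1 d.2) S0 R s) *
                   (\prod_(s <- drop (size d.2).-1 d.2) g s)).

From mathcomp Require Import all_boot all_algebra.
Set Implicit Arguments. Unset Strict Implicit. Unset Printing Implicit Defensive.
Import GRing.Theory.
Local Open Scope ring_scope.

(* All three products are instances of one operation: substitute into the
   leaves of [p] the series [a] on every leaf but the last and [b] on the
   last one, [p o q = comp2 p q q], [p -| q = comp2 p q S0],
   [p |- q = comp2 p S0 q].  This operation is associative in the sense
   [comp2 (comp2 p a b) a' b' = comp2 p (comp2 a a' a') (comp2 b a' b')] and
   has [S0] as a two-sided unit.  Then [x := f -| g] satisfies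
   [x |- g = f o g = S0], hence [x = g^{|- -1} = R(f)], and
   [R(f) -| f = f -| (g o f) = f]. *)

Definition tree_list_ind (P : tree -> Prop) (Q : seq tree -> Prop)
  (Qnil : Q [::]) (Qcons : forall t ts, P t -> Q ts -> Q (t :: ts))
  (PNode : forall ts, Q ts -> P (Node ts)) : forall t, P t :=
  fix F t := match t with
    Node ts => PNode ts ((fix G ts := match ts return Q ts with
                 | [::] => Qnil | t :: ts' => Qcons t ts' (F t) (G ts') end) ts) end.

Notation decomps_seq ts := (prod_lists (map decomps ts)).
Notation cat_leaves c := (flatten (map snd c)).

Lemma decomps_Node ts : decomps (Node ts) = (leaf, [:: Node ts]) ::
  (if ts is [::] then [::]
   else [seq (Node (map fst c), cat_leaves c) | c <- decomps_seq ts]).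
Proof. by case: ts. Qed.

Lemma decomps_Node_gt0 ts : (0 < size ts)%N ->
  decomps (Node ts) = (leaf, [:: Node ts]) ::
  [seq (Node (map fst c), cat_leaves c) | c <- decomps_seq ts].
Proof. by case: ts. Qed.

Lemma all_prod_lists (A : Type) (p : pred A) (ls : seq (seq A)) :
  all (all p) ls -> all (fun c => (size c == size ls) && all p c) (prod_lists ls).
Proof.
elim: ls => //= l ls IH /andP[pl pls].
elim: l pl => //= x l IHl /andP[px pl]; rewrite all_cat IHl // andbT all_map.
by apply: sub_all (IH pls) => c /andP[/eqP sc ac] /=; rewrite sc eqxx px ac.
Qed.

Definition has_leaves (d : tree * seq tree) : bool := (0 < size d.2)%N.

Lemma all_decomps_has_leaves t : all has_leaves (decomps t).
Proof.
move: t; apply: (@tree_list_ind _ (all (fun t => all has_leaves (decomps t)))) => //.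
  by move=> t ts /= -> ->.
move=> [//|t1 ts] Hts; rewrite decomps_Node /= all_map.
have := @all_prod_lists _ has_leaves (map decomps (t1 :: ts)).
rewrite all_map => /(_ Hts); apply: sub_all => -[//|z c] /andP[_ /andP[pz _]] /=.
by rewrite /has_leaves /= size_cat (leq_trans pz) ?leq_addr.
Qed.

Lemma all_decomps_seq ts :
  all (fun c => (size c == size ts) && all has_leaves c) (decomps_seq ts).
Proof.
have := @all_prod_lists _ has_leaves (map decomps ts); rewrite size_map; apply.
by elim: ts => //= t ts ->; rewrite all_decomps_has_leaves.
Qed.

Lemma size_cat_leaves (c : seq (tree * seq tree)) :
  all has_leaves c -> (size c <= size (cat_leaves c))%N.
Proof.
elim: c => //= z c IH /andP[pz pc]; rewrite size_cat.
exact: leq_add pz (IH pc).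
Qed.

Section Graft.
Variable R : comNzRingType.
Implicit Types (p q a b : series R) (Phi Psi : seq tree -> R).

Lemma eq_big_all (I : Type) (P : pred I) (s : seq I) (F G : I -> R) :
  all P s -> (forall x, P x -> F x = G x) -> \sum_(x <- s) F x = \sum_(x <- s) G x.
Proof.
elim: s => [|x s IH] /= ; first by rewrite !big_nil.
by move=> /andP[Px Ps] FG; rewrite !big_cons FG // (IH Ps FG).
Qed.

Lemma big_prod_lists_cat (A : Type) (ls1 ls2 : seq (seq A)) (G : seq A -> R) :
  \sum_(c <- prod_lists (ls1 ++ ls2)) G c =
  \sum_(c1 <- prod_lists ls1) \sum_(c2 <- prod_lists ls2) G (c1 ++ c2).
Proof.
elim: ls1 G => [|l ls1 IH] G /=; first by rewrite big_seq1.
by rewrite !big_allpairs_dep; apply: eq_bigr => x _; rewrite IH.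
Qed.

Lemma big_prod_lists_distr (A : Type) (phi : A -> R) (ls : seq (seq A)) :
  \sum_(c <- prod_lists ls) \prod_(z <- c) phi z = \prod_(l <- ls) \sum_(z <- l) phi z.
Proof.
elim: ls => [|l ls IH] /=; first by rewrite big_seq1 !big_nil.
rewrite big_allpairs_dep big_cons mulr_suml; apply: eq_bigr => x _.
by rewrite -IH mulr_sumr; apply: eq_bigr => r _; rewrite big_cons.
Qed.

Lemma big_decomps_seq1 (u : tree) (G : seq (tree * seq tree) -> R) :
  \sum_(c <- decomps_seq [:: u]) G c = \sum_(d <- decomps u) G [:: d].
Proof.
have -> : decomps_seq [:: u] = [seq x :: r | x <- decomps u, r <- [:: [::]]] by [].
by rewrite big_allpairs_dep; apply: eq_bigr => d _; rewrite big_seq1.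
Qed.

(* Only the decomposition whose lower trees are all leaves survives. *)
Lemma big_decomps_S0 t (G : tree -> R) :
  \sum_(d <- decomps t) G d.1 * \prod_(s <- d.2) S0 R s = G t.
Proof.
move: t G; apply: (@tree_list_ind _ (fun ts => forall H : seq tree -> R,
  \sum_(c <- decomps_seq ts) H (map fst c) * \prod_(z <- c) \prod_(s <- z.2) S0 R s
  = H ts)).
- by move=> H /=; rewrite big_seq1 big_nil mulr1.
- move=> t ts IHt IHts H /=; rewrite big_allpairs_dep /=.
  under eq_bigr => x _.
    under eq_bigr => r _ do rewrite big_cons mulrCA.
    rewrite -mulr_sumr (IHts (fun l => H (x.1 :: l))) mulrC.
  over.
  exact: IHt (fun u => H (u :: ts)).
- move=> [|t1 ts] IH G; rewrite decomps_Node big_cons /=.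
    by rewrite big_nil big_seq1 /S0 /= mulr1 addr0.
  rewrite big_seq1 /S0 /= mulr0 add0r big_map.
  under eq_bigr => c _ do rewrite big_flatten big_map /=.
  exact: IH (fun l => G (Node l)).
Qed.

(* Grafting is associative: decomposing [t] and then its upper tree is the
   same as decomposing [t] and then each of its lower trees. *)
Lemma big_decomps_assoc t (F : tree -> seq tree -> seq tree -> R) :
  \sum_(x <- decomps t) \sum_(y <- decomps x.1) F y.1 y.2 x.2 =
  \sum_(x <- decomps t) \sum_(c <- decomps_seq x.2) F x.1 (map fst c) (cat_leaves c).
Proof.
move: t F; apply: (@tree_list_ind _ (fun ts => forall K : seq tree -> seq tree -> seq tree -> R,
  \sum_(c <- decomps_seq ts) \sum_(e <- decomps_seq (map fst c))
     K (map fst e) (cat_leaves e) (cat_leaves c) =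
  \sum_(c <- decomps_seq ts) \sum_(c' <- decomps_seq (cat_leaves c))
     K (map fst c) (map fst c') (cat_leaves c'))).
- by move=> K /=; rewrite !big_seq1.
- move=> t ts IHt IHts K /=; rewrite !big_allpairs_dep /=.
  under eq_bigr => x _.
    under eq_bigr => r _ do rewrite big_allpairs_dep /=.
    rewrite exchange_big /=.
    under eq_bigr => y _ do
      rewrite (IHts (fun u v w => K (y.1 :: u) (y.2 ++ v) (x.2 ++ w))).
  over.
  apply: eq_trans (IHt (fun u v w =>
    \sum_(r <- decomps_seq ts) \sum_(c'' <- decomps_seq (cat_leaves r))
      K (u :: map fst r) (v ++ map fst c'') (w ++ cat_leaves c''))) _.
  apply: eq_bigr => x _.
  under [RHS]eq_bigr => r _ do rewrite map_cat big_prod_lists_cat.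
  rewrite exchange_big /=; apply: eq_bigr => c1 _; apply: eq_bigr => r _.
  by apply: eq_bigr => c2 _; rewrite !map_cat flatten_cat.
- move=> [|t1 ts] IH F; rewrite decomps_Node; first by rewrite /= !big_seq1.
  rewrite big_cons [in RHS]big_cons big_decomps_seq1 decomps_Node.
  rewrite [X in X + _ = _]big_seq1 [in RHS]big_cons !big_map.
  rewrite (@eq_big_all _ _ _ _ (fun c => F leaf [:: Node (map fst c)] (cat_leaves c) +
      \sum_(e <- decomps_seq (map fst c)) F (Node (map fst e)) (cat_leaves e)
                                            (cat_leaves c))
      (all_decomps_seq (t1 :: ts))); last first.
    move=> c /andP[sc _]; rewrite decomps_Node_gt0; last by case: c sc.
    by rewrite big_cons big_map.
  rewrite big_split addrA; congr (_ + _ + _).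
    by apply: eq_bigr => c _; rewrite /= cats0.
  exact: IH (fun u v w => F (Node u) v w).
Qed.

Definition graft p Phi : series R := fun t => \sum_(d <- decomps t) p d.1 * Phi d.2.

Definition lastprod a b (s : seq tree) : R :=
  (\prod_(x <- take (size s).-1 s) a x) * \prod_(x <- drop (size s).-1 s) b x.

Definition weight_comp Phi Psi (ws : seq tree) : R :=
  \sum_(c <- decomps_seq ws) Phi (map fst c) * Psi (cat_leaves c).

Definition comp2 p a b : series R := graft p (lastprod a b).

Lemma lastprod_nil a b : lastprod a b [::] = 1.
Proof. by rewrite /lastprod /= !big_nil mulr1. Qed.

Lemma lastprod_rcons a b s x : lastprod a b (rcons s x) = (\prod_(y <- s) a y) * b x.
Proof.
by rewrite /lastprod size_rcons /= -cats1 take_size_cat // drop_size_cat // big_seq1.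
Qed.

Lemma lastprod_seq1 a b x : lastprod a b [:: x] = b x.
Proof. by have := lastprod_rcons a b [::] x; rewrite big_nil mul1r. Qed.

Lemma lastprod_cat a b u v : (0 < size v)%N ->
  lastprod a b (u ++ v) = (\prod_(y <- u) a y) * lastprod a b v.
Proof.
by case/lastP: v => [//|v z] _; rewrite -rcons_cat !lastprod_rcons big_cat mulrA.
Qed.

Lemma lastprod_id a s : lastprod a a s = \prod_(y <- s) a y.
Proof. by rewrite /lastprod -big_cat cat_take_drop. Qed.

Lemma graft_assoc p Phi Psi : graft (graft p Phi) Psi =1 graft p (weight_comp Phi Psi).
Proof.
move=> t; rewrite /graft; under eq_bigr => x _ do rewrite mulr_suml.
rewrite (big_decomps_assoc t (fun u v w => p u * Phi v * Psi w)).
apply: eq_bigr => x _; rewrite /weight_comp mulr_sumr.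
by apply: eq_bigr => c _; rewrite mulrA.
Qed.

Lemma weight_comp_lastprod a b a' b' :
  weight_comp (lastprod a b) (lastprod a' b') =1
  lastprod (comp2 a a' a') (comp2 b a' b').
Proof.
case/lastP => [|ws w]; first by rewrite /weight_comp /= big_seq1 !lastprod_nil mulr1.
rewrite lastprod_rcons /weight_comp -cats1 map_cat big_prod_lists_cat.
under [LHS]eq_bigr => c1 _.
  rewrite big_decomps_seq1.
  rewrite (@eq_big_all _ _ _ _ (fun d => ((\prod_(y <- map fst c1) a y) *
     (\prod_(y <- cat_leaves c1) a' y)) * (b d.1 * lastprod a' b' d.2))
     (all_decomps_has_leaves w)); last first.
    move=> d pd; rewrite !map_cat flatten_cat /= cats0 cats1.
    by rewrite lastprod_rcons lastprod_cat // mulrACA.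
  rewrite -mulr_sumr.
over.
rewrite -mulr_suml; congr (_ * _).
rewrite (eq_bigr (fun c1 => \prod_(z <- c1) (a z.1 * \prod_(y <- z.2) a' y))); last first.
  by move=> c1 _; rewrite big_map big_flatten big_map -big_split.
rewrite big_prod_lists_distr big_map; apply: eq_bigr => w' _.
by apply: eq_bigr => d _; rewrite lastprod_id.
Qed.

Lemma eq_comp2 p a b p' a' b' : p =1 p' -> a =1 a' -> b =1 b' ->
  comp2 p a b =1 comp2 p' a' b'.
Proof.
move=> pp' aa' bb' t; apply: eq_bigr => d _.
by rewrite /lastprod pp' (eq_bigr _ (fun y _ => aa' y)) (eq_bigr _ (fun y _ => bb' y)).
Qed.

Lemma comp2_assoc p a b a' b' :
  comp2 (comp2 p a b) a' b' =1 comp2 p (comp2 a a' a') (comp2 b a' b').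
Proof.
move=> t; rewrite /comp2 graft_assoc.
by apply: eq_bigr => d _; rewrite weight_comp_lastprod.
Qed.

Lemma comp2_S0l a b : comp2 (S0 R) a b =1 b.
Proof.
move=> [ts]; rewrite /comp2 /graft.
have [/size0nil-> | ts_gt0] := posnP (size ts).
  by rewrite /= big_seq1 /S0 /= mul1r lastprod_seq1.
rewrite decomps_Node_gt0 // big_cons big_map /S0 /= mul1r lastprod_seq1.
rewrite (@eq_big_all _ _ _ _ (fun _ => 0) (all_decomps_seq ts)) ?big1 ?addr0 //.
move=> [|z c] /andP[/eqP sc _] /=; last by rewrite mul0r.
by rewrite -sc in ts_gt0.
Qed.

Lemma comp2_S0r p : comp2 p (S0 R) (S0 R) =1 p.
Proof.
move=> t; rewrite /comp2 /graft; under eq_bigr do rewrite lastprod_id.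
exact: big_decomps_S0.
Qed.

(* [ocomp], [dashv] and [vdash] omit the decompositions with fewer than two
   lower trees; for [p] in [G_S] these contribute only through the trivial
   decomposition [t = S_0 o t], the others having a non-reduced upper tree. *)
Lemma graft_GS p Phi t : in_GS p ->
  graft p Phi t = Phi [:: t] + \sum_(d <- decomps t | (2 <= size d.2)%N) p d.1 * Phi d.2.
Proof.
case=> p_leaf p_red; rewrite /graft; case: t => ts.
rewrite decomps_Node !big_cons /= p_leaf mul1r; congr (_ + _).
case: ts => [|t1 ts]; first by rewrite !big_nil.
rewrite !big_map [RHS]big_mkcond.
apply: (eq_big_all (all_decomps_seq (t1 :: ts))) => c /andP[sc pc] /=.
case: ifP => // two_leaves.
case: c sc pc two_leaves => [//|z [|z' c]] _ pc two_leaves; first by rewrite p_red ?mul0r.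
by rewrite (leq_trans _ (size_cat_leaves pc)) in two_leaves.
Qed.

Lemma ocompE p q : in_GS p -> ocomp p q =1 comp2 p q q.
Proof.
move=> Gp t; rewrite /comp2 graft_GS // lastprod_id big_seq1 /ocomp.
by congr (_ + _); apply: eq_bigr => d _; rewrite lastprod_id.
Qed.

Lemma dashvE p q : in_GS p -> dashv p q =1 comp2 p q (S0 R).
Proof. by move=> Gp t; rewrite /comp2 graft_GS // lastprod_seq1. Qed.

Lemma vdashE p q : in_GS p -> vdash p q =1 comp2 p (S0 R) q.
Proof. by move=> Gp t; rewrite /comp2 graft_GS // lastprod_seq1. Qed.

End Graft.

Theorem mainTheorem3 (R : comNzRingType) (f g h : series R) :
  in_GS f -> in_GS g -> in_GS h ->
  (forall t, ocomp f g t = @S0 R t) -> (forall t, ocomp g f t = @S0 R t) ->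
  (forall t, vdash h g t = @S0 R t) -> (forall t, vdash g h t = @S0 R t) ->
  forall t, f t = dashv h f t.
Proof.
move=> Gf Gg Gh fg gf _ gh t.
have {}fg : comp2 f g g =1 S0 R by move=> u; rewrite -ocompE.
have {}gf : comp2 g f f =1 S0 R by move=> u; rewrite -ocompE.
have {}gh : comp2 g (S0 R) h =1 S0 R by move=> u; rewrite -vdashE.
pose x := comp2 f g (S0 R).
have xg : comp2 x (S0 R) g =1 S0 R.
  move=> u; rewrite comp2_assoc -fg.
  by apply: eq_comp2 => // v; rewrite ?comp2_S0r ?comp2_S0l.
have hx : h =1 x.
  move=> u; rewrite -[LHS](comp2_S0l (S0 R)).
  rewrite -(eq_comp2 xg (frefl _) (frefl _)) comp2_assoc -[RHS]comp2_S0r.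
  by apply: eq_comp2 => // v; rewrite ?comp2_S0l ?gh.
rewrite dashvE // (eq_comp2 hx (frefl _) (frefl _)) comp2_assoc -[LHS]comp2_S0r.
by apply: eq_comp2 => // v; rewrite ?gf ?comp2_S0l.
Qed.
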